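(* Let $N\ge1$, $c>0$, and $\mathbf w=(f_0,\alpha,f_2,\dots,f_N)^T$ with $\alpha\in(-1,1)$ and $f_0\ne0$. Then every eigenvalue of $c\,\tilde{\mathbf D}(\mathbf w)^{-1}\tilde{\mathbf M}(\mathbf w)\tilde{\mathbf D}(\mathbf w)$ (i.e. every characteristic speed of the system $\frac1c\tilde{\mathbf D}\partial_t\mathbf w+\tilde{\mathbf M}\tilde{\mathbf D}\partial_z\mathbf w=\tilde{\mathbf S}$) lies in $[-c,c]$.
   Context: For a parameter $\alpha\in(-1,1)$ define on $[-1,1]$ the weights $\omega(\mu)=(1+\alpha\mu)^{-4}$ and $\tilde\omega(\mu)=(1+\alpha\mu)^{-5}$. Let $\{\phi_k\}_{k\ge0}$ (resp. $\{\tilde\phi_k\}_{k\ge0}$) be the monic orthogonal polynomials on $[-1,1]$ with respect to $\omega$ (resp. $\tilde\omega$); their coefficients depend smoothly on $\alpha$. Set $K_{j,k}=\int_{-1}^1\mu^j\phi_k\,\omega\,d\mu$, $\tilde K_{j,k}=\int_{-1}^1\mu^j\tilde\phi_k\,\tilde\omega\,d\mu$, $\beta_k=K_{k,k}/\tilde K_{k,k}$, $\gamma_k=\tilde K_{k,k}^{-1}\,\partial K_{k,k}/\partial\alpha$. Given $\mathbf w=(f_0,\alpha,f_2,\dots,f_N)^T$, set $f_1:=0$. The $(N+1)\times(N+1)$ matrix $\tilde{\mathbf D}=\tilde{\mathbf D}(\mathbf w)$ (rows/columns indexed $0,\dots,N$) has entries $\tilde D_{0,0}=\beta_0$, $\tilde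 D_{0,1}=\gamma_0f_0$, $\tilde D_{1,0}=\alpha$, $\tilde D_{1,1}=-4f_0$; for $2\le i\le N$: $\tilde D_{i,1}=\gamma_if_i-4f_{i-1}$, $\tilde D_{i,i}=\beta_i$, and $\tilde D_{i,i-1}=\alpha$ when $i\ge3$; all other entries are $0$. Let $\tilde{\boldsymbol\Lambda}=\mathrm{diag}(\tilde K_{0,0},\dots,\tilde K_{N,N})$ and $\tilde{\mathbf M}=\tilde{\boldsymbol\Lambda}^{-1}\mathbf G$ where $G_{i,j}=\int_{-1}^1\mu\,\tilde\phi_i\tilde\phi_j\,\tilde\omega\,d\mu$, $0\le i,j\le N$. *)

From Stdlib Require Import Reals ClassicalEpsilon.
Open Scope R_scope.

(** Riemann integral of f over [a,b] (the common value of RiemannInt over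
    all integrability proofs; arbitrary if f is not integrable). *)
Definition integral (f : R -> R) (a b : R) : R :=
  epsilon (inhabits 0)
    (fun I => exists pr : Riemann_integrable f a b, RiemannInt pr = I).

(** Derivative of f at x (arbitrary if f is not differentiable at x). *)
Definition dderiv (f : R -> R) (x : R) : R :=
  epsilon (inhabits 0) (fun l => derivable_pt_lim f x l).

Fixpoint rsum (f : nat -> R) (n : nat) : R :=
  match n with O => 0 | S m => rsum f m + f m end.

Definition monic_poly (a : nat -> R) (k : nat) (x : R) : R :=
  x ^ k + rsum (fun i => a i * x ^ i) k.

Definition is_monic_orth (w : R -> R) (k : nat) (a : nat -> R) : Prop :=
  forall j : nat, (j < k)%nat ->
    integral (fun x => x ^ j * monic_poly a k x * w x) (-1) 1 = 0.

Definition orth_poly (w : R -> R) (k : nat) : R -> R :=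
  monic_poly (epsilon (inhabits (fun _ => 0)) (is_monic_orth w k)) k.

Definition omega (alpha x : R) : R := / (1 + alpha * x) ^ 4.
Definition omegat (alpha x : R) : R := / (1 + alpha * x) ^ 5.

Definition phi (alpha : R) (k : nat) : R -> R := orth_poly (omega alpha) k.
Definition phit (alpha : R) (k : nat) : R -> R := orth_poly (omegat alpha) k.

Definition Kc (alpha : R) (j k : nat) : R :=
  integral (fun x => x ^ j * phi alpha k x * omega alpha x) (-1) 1.
Definition Kt (alpha : R) (j k : nat) : R :=
  integral (fun x => x ^ j * phit alpha k x * omegat alpha x) (-1) 1.

Definition beta (alpha : R) (k : nat) : R := Kc alpha k k / Kt alpha k k.
Definition gamma (alpha : R) (k : nat) : R :=
  / Kt alpha k k * dderiv (fun a => Kc a k k) alpha.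

(** Components f_i of w, with the convention f_1 := 0. *)
Definition fw (f : nat -> R) (i : nat) : R :=
  if Nat.eqb i 1 then 0 else f i.

(** The matrix D~(w) (entries for 0 <= i,j <= N are relevant). *)
Definition Dt (alpha : R) (f : nat -> R) (i j : nat) : R :=
  let g := fw f in
  if Nat.eqb i 0 then
    (if Nat.eqb j 0 then beta alpha 0
     else if Nat.eqb j 1 then gamma alpha 0 * g 0%nat else 0)
  else if Nat.eqb i 1 then
    (if Nat.eqb j 0 then alpha
     else if Nat.eqb j 1 then -4 * g 0%nat else 0)
  else if Nat.eqb j 1 then gamma alpha i * g i - 4 * g (i - 1)%nat
  else if Nat.eqb j i then beta alpha i
  else if andb (Nat.leb 3 i) (Nat.eqb j (i - 1)) then alpha
  else 0.

Definition Gm (alpha : R) (i j : nat) : R :=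
  integral (fun x => x * phit alpha i x * phit alpha j x * omegat alpha x) (-1) 1.

(** M~ = Lambda~^{-1} G. *)
Definition Mt (alpha : R) (i j : nat) : R := Gm alpha i j / Kt alpha i i.

(** n x n matrices as functions nat -> nat -> R (indices 0..n-1). *)
Definition mmul (n : nat) (A B : nat -> nat -> R) (i j : nat) : R :=
  rsum (fun k => A i k * B k j) n.

Definition idm (i j : nat) : R := if Nat.eqb i j then 1 else 0.

Definition is_inverse (n : nat) (A B : nat -> nat -> R) : Prop :=
  forall i j, (i < n)%nat -> (j < n)%nat ->
    mmul n A B i j = idm i j /\ mmul n B A i j = idm i j.

Definition minv (n : nat) (A : nat -> nat -> R) : nat -> nat -> R :=
  epsilon (inhabits (fun _ _ => 0)) (is_inverse n A).

Definition mvec (n : nat) (A : nat -> nat -> R) (v : nat -> R) (i : nat) : R :=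
  rsum (fun k => A i k * v k) n.

(** a + i b is a (complex) eigenvalue of the real n x n matrix A:
    there is a nonzero complex vector u + i v with A (u + i v) = (a + i b)(u + i v). *)
Definition is_eigenvalue (n : nat) (A : nat -> nat -> R) (a b : R) : Prop :=
  exists u v : nat -> R,
    (exists i, (i < n)%nat /\ (u i <> 0 \/ v i <> 0)) /\
    forall i, (i < n)%nat ->
      mvec n A u i = a * u i - b * v i /\ mvec n A v i = b * u i + a * v i.

Definition charmat (N : nat) (c alpha : R) (f : nat -> R) (i j : nat) : R :=
  c * mmul (S N) (minv (S N) (Dt alpha f)) (mmul (S N) (Mt alpha) (Dt alpha f)) i j.

(* Since D~ is invertible, c D~^-1 M~ D~ is similar to c M~ = c Λ~^-1 G. The matrix G is
   symmetric and Λ~ = diag(K~_kk) has positive entries K~_kk = ∫ φ~_k² ω~, so M~ is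
   self-adjoint for the inner product Σ_k K~_kk X_k Y_k and its eigenvalues are real. Writing
   p = Σ_k X_k φ~_k, orthogonality gives Σ_k K~_kk X_k² = ∫ p² ω~ while X^T G X = ∫ μ p² ω~,
   and |μ| <= 1 bounds the Rayleigh quotient of M~ by 1.
   D~ becomes lower triangular after adding a multiple of column 0 to column 1; its diagonal
   is then β_0, -f_0 (4 + α K_00'/K_00), β_2, ..., β_N, and the closed form
   K_00 = 2(3 + α²)/(3(1 - α²)³) shows that the second entry does not vanish. *)

From Stdlib Require Import Reals ClassicalEpsilon Lia Lra.
From Coquelicot Require Import Coquelicot.
From mathcomp Require all_boot all_algebra Rstruct.
Open Scope R_scope.

(** * Finite sums and matrices *)

Lemma rsum_ext f g n :
  (forall i, (i < n)%nat -> f i = g i) -> rsum f n = rsum g n.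
Proof.
  induction n as [|n IH]; intros H; simpl; [reflexivity|].
  rewrite IH by (intros; apply H; lia). rewrite H by lia. reflexivity.
Qed.

Lemma rsum_plus f g n : rsum (fun i => f i + g i) n = rsum f n + rsum g n.
Proof. induction n as [|n IH]; simpl; [ring|rewrite IH; ring]. Qed.

Lemma rsum_mult_l c f n : rsum (fun i => c * f i) n = c * rsum f n.
Proof. induction n as [|n IH]; simpl; [ring|rewrite IH; ring]. Qed.

Lemma rsum_mult_r c f n : rsum (fun i => f i * c) n = rsum f n * c.
Proof. induction n as [|n IH]; simpl; [ring|rewrite IH; ring]. Qed.

Lemma rsum_eq0 f n : (forall i, (i < n)%nat -> f i = 0) -> rsum f n = 0.
Proof. intros H. rewrite (rsum_ext f (fun _ => 0)) by auto. clear H. induction n; simpl; lra. Qed.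

Lemma rsum_Sl f n : rsum f (S n) = f 0%nat + rsum (fun i => f (S i)) n.
Proof. induction n as [|n IH]; simpl in *; [ring|rewrite IH; ring]. Qed.

Lemma rsum_eq_single f n k : (k < n)%nat ->
  (forall i, (i < n)%nat -> i <> k -> f i = 0) -> rsum f n = f k.
Proof.
  induction n as [|n IH]; intros Hk H; simpl; [lia|].
  destruct (Nat.eq_dec k n) as [->|Hne].
  - rewrite rsum_eq0; [ring|]. intros; apply H; lia.
  - rewrite IH by (lia || (intros; apply H; lia)). rewrite (H n) by lia. ring.
Qed.

Lemma rsum_exchange (F : nat -> nat -> R) n m :
  rsum (fun i => rsum (fun j => F i j) m) n = rsum (fun j => rsum (fun i => F i j) n) m.
Proof.
  induction n as [|n IH]; simpl.
  - symmetry; apply rsum_eq0; reflexivity.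
  - rewrite IH, <- rsum_plus. reflexivity.
Qed.

Lemma rsum_ge0 f n : (forall i, (i < n)%nat -> 0 <= f i) -> 0 <= rsum f n.
Proof.
  induction n as [|n IH]; intros H; simpl; [lra|].
  assert (0 <= rsum f n) by (apply IH; intros; apply H; lia).
  assert (0 <= f n) by (apply H; lia). lra.
Qed.

Lemma rsum_gt0 f n k : (k < n)%nat ->
  (forall i, (i < n)%nat -> 0 <= f i) -> 0 < f k -> 0 < rsum f n.
Proof.
  induction n as [|n IH]; intros Hk H Hfk; simpl; [lia|].
  assert (0 <= rsum f n) by (apply rsum_ge0; intros; apply H; lia).
  assert (0 <= f n) by (apply H; lia).
  destruct (Nat.eq_dec k n) as [->|Hne]; [lra|].
  assert (0 < rsum f n) by (apply IH; [lia|intros; apply H; lia|exact Hfk]). lra.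
Qed.

Lemma mvec_ext n A u u' i :
  (forall j, (j < n)%nat -> u j = u' j) -> mvec n A u i = mvec n A u' i.
Proof. intros H. apply rsum_ext. intros j Hj. rewrite H by exact Hj. reflexivity. Qed.

Lemma mvec_mmul n A C u i : mvec n (mmul n A C) u i = mvec n A (mvec n C u) i.
Proof.
  unfold mvec, mmul.
  rewrite (rsum_ext _ (fun j => rsum (fun k => A i k * C k j * u j) n))
    by (intros; rewrite <- rsum_mult_r; reflexivity).
  rewrite rsum_exchange. apply rsum_ext. intros k _.
  rewrite <- rsum_mult_l. apply rsum_ext. intros; ring.
Qed.

Lemma mvec_lin n A u v p q i :
  mvec n A (fun j => p * u j + q * v j) i = p * mvec n A u i + q * mvec n A v i.
Proof. unfold mvec. rewrite <- !rsum_mult_l, <- rsum_plus. apply rsum_ext. intros; ring. Qed.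

Lemma mvec_mmul_idm n A B y i : (i < n)%nat ->
  (forall j, (j < n)%nat -> mmul n A B i j = idm i j) -> mvec n (mmul n A B) y i = y i.
Proof.
  intros Hi H. unfold mvec. rewrite (rsum_eq_single _ n i Hi).
  - rewrite H by exact Hi. unfold idm. rewrite Nat.eqb_refl. ring.
  - intros j Hj Hji. rewrite H by exact Hj. unfold idm.
    destruct (Nat.eqb_spec i j); [lia|ring].
Qed.

Definition wdot (n : nat) (L X Y : nat -> R) : R := rsum (fun k => L k * (X k * Y k)) n.

Definition bilin (n : nat) (G : nat -> nat -> R) (X Y : nat -> R) : R :=
  rsum (fun k => X k * mvec n G Y k) n.

Lemma bilin_sym n G X Y : (forall k l, (k < n)%nat -> (l < n)%nat -> G k l = G l k) ->
  bilin n G X Y = bilin n G Y X.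
Proof.
  intros HG. unfold bilin, mvec.
  rewrite (rsum_ext _ (fun k => rsum (fun l => X k * G k l * Y l) n))
    by (intros; rewrite <- rsum_mult_l; apply rsum_ext; intros; ring).
  rewrite rsum_exchange. apply rsum_ext. intros l Hl.
  rewrite <- rsum_mult_l. apply rsum_ext. intros k Hk. rewrite HG by assumption. ring.
Qed.

Lemma bilin_of_mvec n G L X Y Z p q :
  (forall k, (k < n)%nat -> mvec n G Y k = L k * (p * Y k + q * Z k)) ->
  bilin n G X Y = p * wdot n L X Y + q * wdot n L X Z.
Proof.
  intros H. unfold bilin, wdot. rewrite <- !rsum_mult_l, <- rsum_plus.
  apply rsum_ext. intros k Hk. rewrite H by exact Hk. ring.
Qed.

Lemma is_eigenvalue_scale n c A a b : c <> 0 ->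
  is_eigenvalue n (fun i j => c * A i j) a b -> is_eigenvalue n A (a / c) (b / c).
Proof.
  intros Hc [u [v [Hnz Heig]]]. exists u, v. split; [exact Hnz|].
  intros i Hi. destruct (Heig i Hi) as [Hu Hv]. unfold mvec in Hu, Hv.
  rewrite (rsum_ext _ (fun k => c * (A i k * u k))), rsum_mult_l in Hu by (intros; ring).
  rewrite (rsum_ext _ (fun k => c * (A i k * v k))), rsum_mult_l in Hv by (intros; ring).
  unfold mvec. split; field_simplify_eq; auto; lra.
Qed.

Lemma is_eigenvalue_similar n A B M a b : is_inverse n A B ->
  is_eigenvalue n (mmul n B (mmul n M A)) a b -> is_eigenvalue n M a b.
Proof.
  intros HAB [u [v [[i0 [Hi0 Hnz]] Heig]]].
  assert (HBA : forall w i, (i < n)%nat -> mvec n B (mvec n A w) i = w i).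
  { intros w i Hi. rewrite <- mvec_mmul. apply mvec_mmul_idm; [exact Hi|].
    intros j Hj. exact (proj2 (HAB i j Hi Hj)). }
  assert (HAB' : forall w i, (i < n)%nat -> mvec n A (mvec n B w) i = w i).
  { intros w i Hi. rewrite <- mvec_mmul. apply mvec_mmul_idm; [exact Hi|].
    intros j Hj. exact (proj1 (HAB i j Hi Hj)). }
  assert (Hconj : forall w p q w1 w2,
    (forall i, (i < n)%nat -> mvec n (mmul n B (mmul n M A)) w i = p * w1 i + q * w2 i) ->
    forall i, (i < n)%nat ->
      mvec n M (mvec n A w) i = p * mvec n A w1 i + q * mvec n A w2 i).
  { intros w p q w1 w2 Hw i Hi. rewrite <- mvec_lin, <- (mvec_ext _ _ _ _ _ Hw).
    rewrite <- HAB' by exact Hi. apply mvec_ext. intros j _.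
    rewrite mvec_mmul. apply mvec_ext. intros; symmetry; apply mvec_mmul. }
  assert (Hsupp : forall w, w i0 <> 0 -> exists k, (k < n)%nat /\ mvec n A w k <> 0).
  { intros w Hw. apply NNPP. intros Hnone. apply Hw. rewrite <- HBA by exact Hi0.
    apply rsum_eq0. intros k Hk. destruct (Req_dec (mvec n A w k) 0) as [->|Hne]; [ring|].
    exfalso. apply Hnone. exists k. split; assumption. }
  exists (mvec n A u), (mvec n A v). split.
  - destruct Hnz as [Hu|Hv]; [destruct (Hsupp u Hu) as [k Hk]|destruct (Hsupp v Hv) as [k Hk]];
      exists k; tauto.
  - intros i Hi. split.
    + replace (a * mvec n A u i - b * mvec n A v i)
        with (a * mvec n A u i + (- b) * mvec n A v i) by ring.
      apply Hconj; [|exact Hi]. intros j Hj. rewrite (proj1 (Heig j Hj)). ring.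
    + apply Hconj; [|exact Hi]. intros j Hj. exact (proj2 (Heig j Hj)).
Qed.

(* Self-adjointness of [diag(L)^-1 G] for the inner product [wdot L] forces a real spectrum,
   and the bound on the quadratic form confines it to [-1, 1]. *)
Lemma is_eigenvalue_weighted_symmetric n (G : nat -> nat -> R) (L : nat -> R) a b :
  (forall k, (k < n)%nat -> 0 < L k) ->
  (forall k l, (k < n)%nat -> (l < n)%nat -> G k l = G l k) ->
  (forall X, Rabs (bilin n G X X) <= wdot n L X X) ->
  is_eigenvalue n (fun i j => G i j / L i) a b -> b = 0 /\ -1 <= a <= 1.
Proof.
  intros HL HG Hbound [u [v [[i0 [Hi0 Hnz]] Heig]]].
  assert (HmvecG : forall w p q w1 w2,
    (forall k, (k < n)%nat -> mvec n (fun i j => G i j / L i) w k = p * w1 k + q * w2 k) ->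
    forall k, (k < n)%nat -> mvec n G w k = L k * (p * w1 k + q * w2 k)).
  { intros w p q w1 w2 Hw k Hk. rewrite <- Hw by exact Hk. unfold mvec.
    rewrite <- rsum_mult_l. apply rsum_ext. intros. field. specialize (HL k Hk). lra. }
  assert (Hu : forall k, (k < n)%nat -> mvec n G u k = L k * (a * u k + (- b) * v k)).
  { apply HmvecG. intros k Hk. rewrite (proj1 (Heig k Hk)). ring. }
  assert (Hv : forall k, (k < n)%nat -> mvec n G v k = L k * (a * v k + b * u k)).
  { apply HmvecG. intros k Hk. rewrite (proj2 (Heig k Hk)). ring. }
  assert (Hsym : forall X Y, wdot n L X Y = wdot n L Y X)
    by (intros; apply rsum_ext; intros; ring).
  assert (Hpos : 0 < wdot n L u u + wdot n L v v).
  { unfold wdot. rewrite <- rsum_plus. apply (rsum_gt0 _ n i0 Hi0).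
    - intros i Hi. specialize (HL i Hi). nra.
    - assert (0 < u i0 * u i0 + v i0 * v i0)
        by (destruct Hnz as [H|H]; apply Rsqr_pos_lt in H; unfold Rsqr in H; nra).
      specialize (HL i0 Hi0). nra. }
  assert (Huv := bilin_sym n G u v HG).
  rewrite (bilin_of_mvec _ _ _ _ _ _ _ _ Hv), (bilin_of_mvec _ _ _ _ _ _ _ _ Hu), (Hsym v u)
    in Huv.
  assert (Hb : b = 0) by nra. subst b.
  assert (HUU := Hbound u). assert (HVV := Hbound v).
  rewrite (bilin_of_mvec _ _ _ _ _ _ _ _ Hu) in HUU.
  rewrite (bilin_of_mvec _ _ _ _ _ _ _ _ Hv) in HVV.
  apply Rabs_le_between in HUU. apply Rabs_le_between in HVV.
  split; [reflexivity|]. split; nra.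
Qed.

(** * Integrals over [-1, 1] *)

Definition Cont (f : R -> R) : Prop := forall x, -1 <= x <= 1 -> continuous f x.

Lemma Cont_const c : Cont (fun _ => c).
Proof. intros x _. apply continuous_const. Qed.

Lemma Cont_id : Cont (fun x => x).
Proof. intros x _. apply continuous_id. Qed.

Lemma Cont_plus f g : Cont f -> Cont g -> Cont (fun x => f x + g x).
Proof. intros Hf Hg x Hx. apply (continuous_plus f g); auto. Qed.

Lemma Cont_mult f g : Cont f -> Cont g -> Cont (fun x => f x * g x).
Proof. intros Hf Hg x Hx. apply (continuous_mult f g); auto. Qed.

Lemma Cont_pow f k : Cont f -> Cont (fun x => f x ^ k).
Proof. intros Hf. induction k; simpl; [apply Cont_const|apply Cont_mult; assumption]. Qed.

Lemma Cont_inv f : Cont f -> (forall x, -1 <= x <= 1 -> f x <> 0) -> Cont (fun x => / f x).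
Proof. intros Hf Hnz x Hx. apply continuous_Rinv_comp; auto. Qed.

Lemma Cont_rsum (F : nat -> R -> R) n :
  (forall i, (i < n)%nat -> Cont (F i)) -> Cont (fun x => rsum (fun i => F i x) n).
Proof.
  induction n as [|n IH]; intros H; simpl; [apply Cont_const|].
  apply Cont_plus; [apply IH; intros; apply H; lia|apply H; lia].
Qed.

Lemma Cont_monic a k : Cont (monic_poly a k).
Proof.
  apply Cont_plus; [apply Cont_pow, Cont_id|].
  apply (Cont_rsum (fun i x => a i * x ^ i)). intros.
  apply Cont_mult; [apply Cont_const|apply Cont_pow, Cont_id].
Qed.

Definition lincomb (n : nat) (c : nat -> R) (F : nat -> R -> R) (x : R) : R :=
  rsum (fun i => c i * F i x) n.

Lemma Cont_lincomb n c F : (forall i, Cont (F i)) -> Cont (lincomb n c F).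
Proof.
  intros HF. apply (Cont_rsum (fun i x => c i * F i x)). intros.
  apply Cont_mult; [apply Cont_const|apply HF].
Qed.

Ltac cont := solve [repeat match goal with
  | |- forall _, _ => intro
  | H : Cont ?f |- Cont ?f => exact H
  | H : forall _, Cont _ |- Cont _ => apply H
  | |- Cont (fun x => x) => apply Cont_id
  | |- Cont (fun _ => _) => apply Cont_const
  | |- Cont (fun _ => _ * _) => apply Cont_mult
  | |- Cont (Rmult ?c) => apply (Cont_mult (fun _ => c) (fun x => x))
  | |- Cont (fun _ => _ + _) => apply Cont_plus
  | |- Cont (fun _ => _ ^ _) => apply Cont_pow
  | |- Cont (fun _ => rsum _ _) => apply Cont_rsum
  | |- Cont (monic_poly _ _) => apply Cont_monic
  | |- Cont (orth_poly _ _) => apply Cont_monic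
  | |- Cont (lincomb _ _ _) => apply Cont_lincomb
  end].

Definition I1 (f : R -> R) : R := RInt f (-1) 1.

Lemma ex_RInt_Cont f : Cont f -> ex_RInt f (-1) 1.
Proof.
  intros H. apply (ex_RInt_continuous (V := R_CompleteNormedModule)). intros z Hz.
  rewrite Rmin_left, Rmax_right in Hz by lra. apply H, Hz.
Qed.

Lemma integral_I1 f : Cont f -> integral f (-1) 1 = I1 f.
Proof.
  intros H. unfold integral.
  assert (Hex : exists I, exists pr : Riemann_integrable f (-1) 1, RiemannInt pr = I).
  { eexists. exists (ex_RInt_Reals_0 _ _ _ (ex_RInt_Cont f H)). reflexivity. }
  destruct (epsilon_spec (inhabits 0) _ Hex) as [pr <-].
  symmetry. apply RInt_Reals.
Qed.

Lemma I1_ext f g : (forall x, f x = g x) -> I1 f = I1 g.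
Proof. intros H. apply RInt_ext. intros; apply H. Qed.

Lemma I1_plus f g : Cont f -> Cont g -> I1 (fun x => f x + g x) = I1 f + I1 g.
Proof. intros Hf Hg. apply (RInt_plus f g); apply ex_RInt_Cont; assumption. Qed.

Lemma I1_scal c f : Cont f -> I1 (fun x => c * f x) = c * I1 f.
Proof. intros Hf. apply (RInt_scal f). apply ex_RInt_Cont, Hf. Qed.

Lemma I1_minus f g : Cont f -> Cont g -> I1 (fun x => f x - g x) = I1 f - I1 g.
Proof.
  intros Hf Hg. rewrite (I1_ext _ (fun x => f x + (-1) * g x)) by (intros; ring).
  rewrite I1_plus, I1_scal by cont. ring.
Qed.

Lemma I1_rsum (F : nat -> R -> R) n : (forall i, (i < n)%nat -> Cont (F i)) ->
  I1 (fun x => rsum (fun i => F i x) n) = rsum (fun i => I1 (F i)) n.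
Proof.
  induction n as [|n IH]; intros H; simpl.
  - unfold I1. rewrite RInt_const. unfold scal; simpl; unfold mult; simpl. ring.
  - rewrite I1_plus, IH; [reflexivity|intros; apply H; lia| |apply H; lia].
    apply Cont_rsum. intros; apply H; lia.
Qed.

Lemma I1_le f g : Cont f -> Cont g -> (forall x, -1 <= x <= 1 -> f x <= g x) -> I1 f <= I1 g.
Proof.
  intros Hf Hg H. apply RInt_le; [lra|apply ex_RInt_Cont, Hf|apply ex_RInt_Cont, Hg|].
  intros; apply H; lra.
Qed.

Lemma I1_abs_le f g : Cont f -> Cont g ->
  (forall x, -1 <= x <= 1 -> Rabs (f x) <= g x) -> Rabs (I1 f) <= I1 g.
Proof.
  intros Hf Hg H. apply Rabs_le. split.
  - replace (- I1 g) with (I1 (fun x => (-1) * g x)) by (rewrite I1_scal by exact Hg; ring).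
    apply I1_le; [cont|exact Hf|].
    intros x Hx. specialize (H x Hx). apply Rabs_le_between in H. lra.
  - apply I1_le; [exact Hf|exact Hg|].
    intros x Hx. specialize (H x Hx). apply Rabs_le_between in H. lra.
Qed.

Lemma I1_gt0 g x0 : Cont g -> (forall x, -1 <= x <= 1 -> 0 <= g x) ->
  -1 < x0 < 1 -> 0 < g x0 -> 0 < I1 g.
Proof.
  intros Hc Hnn Hx0 Hgx0.
  destruct (Hc x0 ltac:(lra) (fun y => 0 < y) (open_gt 0 (g x0) Hgx0)) as [eps Heps].
  set (d := Rmin (eps / 2) (Rmin ((1 - x0) / 2) ((x0 + 1) / 2))).
  assert (Hd : 0 < d /\ d <= eps / 2 /\ d <= (1 - x0) / 2 /\ d <= (x0 + 1) / 2).
  { pose proof (cond_pos eps). unfold d. repeat split;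
      [repeat apply Rmin_pos; lra|apply Rmin_l|
       eapply Rle_trans; [apply Rmin_r|apply Rmin_l]|
       eapply Rle_trans; [apply Rmin_r|apply Rmin_r]]. }
  assert (Hex : forall a b, -1 <= a <= b -> b <= 1 -> ex_RInt g a b).
  { intros a b Hab Hb. apply (ex_RInt_continuous (V := R_CompleteNormedModule)). intros z Hz.
    rewrite Rmin_left, Rmax_right in Hz by lra. apply Hc. lra. }
  unfold I1.
  rewrite <- (RInt_Chasles g (-1) (x0 - d) 1), <- (RInt_Chasles g (x0 - d) (x0 + d) 1)
    by (apply Hex; lra).
  assert (0 <= RInt g (-1) (x0 - d))
    by (apply RInt_ge_0; [lra|apply Hex; lra|intros; apply Hnn; lra]).
  assert (0 <= RInt g (x0 + d) 1)
    by (apply RInt_ge_0; [lra|apply Hex; lra|intros; apply Hnn; lra]).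
  assert (0 < RInt g (x0 - d) (x0 + d)).
  { apply RInt_gt_0; [lra| |intros; apply Hc; lra].
    intros x Hx. apply Heps. change (Rabs (x - x0) < eps). apply Rabs_def1; lra. }
  change (0 < RInt g (-1) (x0 - d) + (RInt g (x0 - d) (x0 + d) + RInt g (x0 + d) 1)). lra.
Qed.

(** * Monic orthogonal polynomials *)

Lemma rsum_poly_abs_le (c : nat -> R) x n : 0 <= x <= 1 ->
  Rabs (rsum (fun i => c i * x ^ i) n) <= rsum (fun i => Rabs (c i)) n.
Proof.
  intros Hx. induction n as [|n IH]; simpl; [rewrite Rabs_R0; lra|].
  eapply Rle_trans; [apply Rabs_triang|]. apply Rplus_le_compat; [exact IH|].
  rewrite Rabs_mult, (Rabs_right (x ^ n)) by (apply Rle_ge, pow_le; lra).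
  pose proof (Rabs_pos (c n)). pose proof (pow_le x n ltac:(lra)).
  pose proof (pow_incr x 1 n ltac:(lra)). rewrite pow1 in *. nra.
Qed.

(* Near [0] a polynomial is dominated by its lowest nonzero coefficient. *)
Lemma poly_nonzero_in_01 k (b : nat -> R) : b k <> 0 ->
  exists x, 0 < x < 1 /\ rsum (fun i => b i * x ^ i) (S k) <> 0.
Proof.
  revert b. induction k as [|k IH]; intros b Hbk.
  - exists (1 / 2). split; [lra|]. simpl. rewrite Rplus_0_l, Rmult_1_r. exact Hbk.
  - assert (Hsplit : forall x, rsum (fun i => b i * x ^ i) (S (S k)) =
                                b 0%nat + x * rsum (fun i => b (S i) * x ^ i) (S k)).
    { intros x. rewrite rsum_Sl, <- rsum_mult_l. simpl pow at 1. rewrite Rmult_1_r.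
      f_equal. apply rsum_ext. intros; simpl; ring. }
    destruct (Req_dec (b 0%nat) 0) as [Hb0|Hb0].
    + destruct (IH (fun i => b (S i)) Hbk) as [x [Hx Hne]].
      exists x. split; [exact Hx|]. rewrite Hsplit, Hb0, Rplus_0_l.
      apply Rmult_integral_contrapositive_currified; [lra|exact Hne].
    + set (S0 := rsum (fun i => Rabs (b (S i))) (S k)).
      assert (HS0 : 0 <= S0) by (apply rsum_ge0; intros; apply Rabs_pos).
      pose proof (Rabs_pos_lt _ Hb0) as Hb0pos.
      set (x := Rmin (1 / 2) (Rabs (b 0%nat) / (2 * (S0 + 1)))).
      assert (Hx : 0 < x <= 1 / 2).
      { split; [apply Rmin_pos; [lra|apply Rdiv_lt_0_compat; lra]|apply Rmin_l]. }
      assert (HxS0 : x * (2 * (S0 + 1)) <= Rabs (b 0%nat)).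
      { replace (Rabs (b 0%nat)) with (Rabs (b 0%nat) / (2 * (S0 + 1)) * (2 * (S0 + 1)))
          by (field; lra).
        apply Rmult_le_compat_r; [lra|apply Rmin_r]. }
      exists x. split; [lra|]. rewrite Hsplit. intros Hzero.
      pose proof (rsum_poly_abs_le (fun i => b (S i)) x (S k) ltac:(lra)) as Hbound.
      cbv beta in Hbound. fold S0 in Hbound.
      assert (Habs : Rabs (b 0%nat) = Rabs (x * rsum (fun i => b (S i) * x ^ i) (S k))).
      { replace (b 0%nat) with (- (x * rsum (fun i => b (S i) * x ^ i) (S k))) by lra.
        apply Rabs_Ropp. }
      rewrite Rabs_mult, (Rabs_right x) in Habs by lra.
      nra.
Qed.

Definition monic_coef (a : nat -> R) (k i : nat) : R :=
  if Nat.ltb i k then a i else if Nat.eqb i k then 1 else 0.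

Lemma monic_poly_rsum a k n x : (k < n)%nat ->
  monic_poly a k x = rsum (fun i => monic_coef a k i * x ^ i) n.
Proof.
  induction n as [|n IH]; intros Hkn; [lia|]. simpl.
  destruct (Nat.eq_dec k n) as [->|Hne].
  - unfold monic_poly, monic_coef. rewrite Nat.ltb_irrefl, Nat.eqb_refl, Rplus_comm.
    f_equal; [|ring]. apply rsum_ext. intros i Hi. apply Nat.ltb_lt in Hi. rewrite Hi. reflexivity.
  - rewrite IH by lia. unfold monic_coef.
    replace (Nat.ltb n k) with false by (symmetry; apply Nat.ltb_ge; lia).
    replace (Nat.eqb n k) with false by (symmetry; apply Nat.eqb_neq; lia). ring.
Qed.

Lemma monic_poly_nonzero_in_01 a k : exists x, 0 < x < 1 /\ monic_poly a k x <> 0.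
Proof.
  assert (Hk : monic_coef a k k <> 0)
    by (unfold monic_coef; rewrite Nat.ltb_irrefl, Nat.eqb_refl; lra).
  destruct (poly_nonzero_in_01 k _ Hk) as [x [Hx Hne]].
  exists x. split; [exact Hx|]. rewrite (monic_poly_rsum a k (S k)) by lia. exact Hne.
Qed.

Definition ip (w g h : R -> R) : R := I1 (fun x => g x * h x * w x).

Lemma ip_sym w g h : ip w g h = ip w h g.
Proof. apply I1_ext. intros; ring. Qed.

Lemma ip_lincomb_r w g n c F : Cont w -> Cont g -> (forall i, Cont (F i)) ->
  ip w g (lincomb n c F) = rsum (fun i => c i * ip w g (F i)) n.
Proof.
  intros Hw Hg HF. unfold ip, lincomb.
  rewrite (I1_ext _ (fun x => rsum (fun i => c i * (g x * F i x * w x)) n)).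
  - rewrite (I1_rsum (fun i x => c i * (g x * F i x * w x))) by (intros; cont).
    apply rsum_ext. intros. apply I1_scal. cont.
  - intros x. transitivity (rsum (fun i => c i * F i x) n * (g x * w x)); [ring|].
    rewrite <- rsum_mult_r. apply rsum_ext. intros; ring.
Qed.

Lemma ip_lincomb_l w g n c F : Cont w -> Cont g -> (forall i, Cont (F i)) ->
  ip w (lincomb n c F) g = rsum (fun i => c i * ip w (F i) g) n.
Proof.
  intros Hw Hg HF. rewrite ip_sym, ip_lincomb_r by assumption.
  apply rsum_ext. intros. rewrite ip_sym. reflexivity.
Qed.

Lemma bilin_ip h n F X Y : Cont h -> (forall i, Cont (F i)) ->
  bilin n (fun k l => ip h (F k) (F l)) X Y = ip h (lincomb n X F) (lincomb n Y F).
Proof.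
  intros Hh HF. rewrite ip_lincomb_l by cont. apply rsum_ext. intros k _.
  rewrite ip_lincomb_r by cont. unfold mvec. f_equal. apply rsum_ext. intros; ring.
Qed.

Lemma monic_poly_sub_lincomb k (A : nat -> nat -> R) (c : nat -> R) :
  exists a, forall x,
    monic_poly a (S k) x = x ^ S k - lincomb (S k) c (fun m => monic_poly (A m) m) x.
Proof.
  exists (fun i => - rsum (fun m => c m * monic_coef (A m) m i) (S k)). intros x.
  unfold monic_poly at 1, lincomb. unfold Rminus. f_equal.
  rewrite (rsum_ext (fun i => _ * x ^ i)
    (fun i => (-1) * rsum (fun m => c m * monic_coef (A m) m i * x ^ i) (S k)))
    by (intros; rewrite rsum_mult_r; ring).
  rewrite rsum_mult_l, rsum_exchange, <- (Rmult_1_l (rsum (fun m => c m * _) _)),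
    Ropp_mult_distr_l.
  f_equal. apply rsum_ext. intros m Hm.
  rewrite (monic_poly_rsum (A m) m (S k)) by lia. rewrite <- rsum_mult_l.
  apply rsum_ext. intros; ring.
Qed.

Section OrthogonalPolynomials.

Variable w : R -> R.
Hypothesis w_cont : Cont w.
Hypothesis w_pos : forall x, -1 <= x <= 1 -> 0 < w x.

Lemma ip_monic_pos a k : 0 < ip w (monic_poly a k) (monic_poly a k).
Proof.
  destruct (monic_poly_nonzero_in_01 a k) as [x0 [Hx0 Hne]].
  apply (I1_gt0 _ x0); [cont| |lra|].
  - intros x Hx. specialize (w_pos x Hx). pose proof (Rle_0_sqr (monic_poly a k x)).
    unfold Rsqr in *. nra.
  - specialize (w_pos x0 ltac:(lra)). pose proof (Rsqr_pos_lt _ Hne). unfold Rsqr in *. nra.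
Qed.

Lemma ip_monic_orth_lower a k m b : is_monic_orth w k a -> (m <= k)%nat ->
  ip w (lincomb m b (fun j x => x ^ j)) (monic_poly a k) = 0.
Proof.
  intros Ha Hm. rewrite ip_lincomb_l by cont. apply rsum_eq0. intros j Hj.
  unfold ip. rewrite <- integral_I1 by cont. rewrite Ha by lia. ring.
Qed.

Lemma ip_monic_orth_lt a i a' j : is_monic_orth w j a' -> (i < j)%nat ->
  ip w (monic_poly a i) (monic_poly a' j) = 0.
Proof.
  intros Ha' Hij.
  transitivity (ip w (lincomb (S i) (monic_coef a i) (fun l x => x ^ l)) (monic_poly a' j)).
  - apply I1_ext. intros x. rewrite (monic_poly_rsum a i (S i)) by lia. reflexivity.
  - apply ip_monic_orth_lower; [exact Ha'|lia].
Qed.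

Lemma moment_monic_orth a k : is_monic_orth w k a ->
  integral (fun x => x ^ k * monic_poly a k x * w x) (-1) 1 =
  ip w (monic_poly a k) (monic_poly a k).
Proof.
  intros Ha. rewrite integral_I1 by cont.
  rewrite <- (Rplus_0_r (I1 _)), <- (ip_monic_orth_lower a k k a Ha (le_n k)).
  unfold ip. rewrite <- I1_plus by cont. apply I1_ext. intros x.
  unfold lincomb, monic_poly. ring.
Qed.

Lemma moments_eq0_of_ip_monic_eq0 k (A : nat -> nat -> R) h : Cont h ->
  (forall m, (m <= k)%nat -> ip w (monic_poly (A m) m) h = 0) ->
  forall j, (j <= k)%nat -> ip w (fun x => x ^ j) h = 0.
Proof.
  intros Hh HA j. induction j as [j IH] using (well_founded_induction Wf_nat.lt_wf). intros Hj.
  transitivity (ip w (monic_poly (A j) j) h - ip w (lincomb j (A j) (fun i x => x ^ i)) h).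
  { unfold ip. rewrite <- I1_minus by cont. apply I1_ext. intros x.
    unfold lincomb, monic_poly. ring. }
  rewrite HA, ip_lincomb_l, rsum_eq0 by (lia || cont || (intros i Hi; rewrite IH by lia; ring)).
  ring.
Qed.

Lemma monic_orth_extend k (A : nat -> nat -> R) :
  (forall m, (m <= k)%nat -> is_monic_orth w m (A m)) -> exists a, is_monic_orth w (S k) a.
Proof.
  intros HA.
  set (P := fun m => monic_poly (A m) m).
  set (c := fun m => ip w (P m) (fun x => x ^ S k) / ip w (P m) (P m)).
  destruct (monic_poly_sub_lincomb k A c) as [a Ha]. fold P in Ha. exists a.
  assert (Hperp : forall m, (m <= k)%nat -> ip w (P m) (monic_poly a (S k)) = 0).
  { intros m Hm.
    transitivity (ip w (P m) (fun x => x ^ S k) - ip w (P m) (lincomb (S k) c P)).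
    { unfold ip. rewrite <- I1_minus by (unfold P; cont).
      apply I1_ext. intros x. rewrite Ha. ring. }
    rewrite ip_lincomb_r by (unfold P; cont).
    rewrite (rsum_eq_single _ (S k) m) by (lia || (intros m' Hm' Hne;
      destruct (Nat.lt_gt_cases m m') as [[Hlt|Hgt] _]; [auto| |rewrite ip_sym];
      (unfold P; rewrite ip_monic_orth_lt; [ring|apply HA; lia|lia]))).
    unfold c. field. apply Rgt_not_eq, ip_monic_pos. }
  intros j Hj. rewrite integral_I1 by cont.
  exact (moments_eq0_of_ip_monic_eq0 k A _ (Cont_monic a (S k)) Hperp j ltac:(lia)).
Qed.

Lemma monic_orth_family k :
  exists A : nat -> nat -> R, forall m, (m <= k)%nat -> is_monic_orth w m (A m).
Proof.
  induction k as [|k [A HA]].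
  - exists (fun _ _ => 0). intros m Hm j Hj. lia.
  - destruct (monic_orth_extend k A HA) as [a Ha].
    exists (fun m => if Nat.eqb m (S k) then a else A m). intros m Hm.
    destruct (Nat.eqb_spec m (S k)) as [->|]; [exact Ha|apply HA; lia].
Qed.

Lemma orth_poly_spec k : is_monic_orth w k (epsilon (inhabits (fun _ => 0)) (is_monic_orth w k)).
Proof.
  apply epsilon_spec. destruct (monic_orth_family k) as [A HA]. exists (A k). apply HA. lia.
Qed.

Lemma ip_orth_poly_neq k l : k <> l -> ip w (orth_poly w k) (orth_poly w l) = 0.
Proof.
  intros Hkl. apply Nat.lt_gt_cases in Hkl as [H|H]; [|rewrite ip_sym];
    (apply ip_monic_orth_lt; [apply orth_poly_spec|exact H]).
Qed.

Lemma ip_orth_poly_pos k : 0 < ip w (orth_poly w k) (orth_poly w k).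
Proof. apply ip_monic_pos. Qed.

Lemma moment_orth_poly k :
  integral (fun x => x ^ k * orth_poly w k x * w x) (-1) 1 = ip w (orth_poly w k) (orth_poly w k).
Proof. apply moment_monic_orth, orth_poly_spec. Qed.

Lemma wdot_ip_orth_poly n X :
  wdot n (fun k => ip w (orth_poly w k) (orth_poly w k)) X X =
  ip w (lincomb n X (orth_poly w)) (lincomb n X (orth_poly w)).
Proof.
  rewrite <- bilin_ip by cont. apply rsum_ext. intros k Hk. unfold mvec.
  rewrite (rsum_eq_single _ n k Hk); [ring|].
  intros l _ Hlk. rewrite ip_orth_poly_neq by auto. ring.
Qed.

(* [|x| <= 1] on [-1, 1]: multiplication by [x] is a contraction for the inner product of [w]. *)
Lemma bilin_position_le n X :
  Rabs (bilin n (fun k l => ip (fun x => x * w x) (orth_poly w k) (orth_poly w l)) X X)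
  <= wdot n (fun k => ip w (orth_poly w k) (orth_poly w k)) X X.
Proof.
  rewrite wdot_ip_orth_poly, bilin_ip by cont.
  set (p := lincomb n X (orth_poly w)). assert (Hp : Cont p) by (unfold p; cont).
  apply I1_abs_le; [cont|cont|]. intros x Hx.
  assert (Hpw : 0 <= p x * p x * w x).
  { apply Rmult_le_pos; [apply Rle_0_sqr|apply Rlt_le, w_pos, Hx]. }
  replace (p x * p x * (x * w x)) with (x * (p x * p x * w x)) by ring.
  rewrite Rabs_mult, (Rabs_right (p x * p x * w x)) by lra.
  assert (Rabs x <= 1) by (apply Rabs_le; lra). pose proof (Rabs_pos x). nra.
Qed.

End OrthogonalPolynomials.

(** * The weights (1 + α μ)^-m *)

Lemma affine_pos a x : -1 < a < 1 -> -1 <= x <= 1 -> 0 < 1 + a * x.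
Proof. intros Ha Hx. destruct (Rle_dec 0 a); nra. Qed.

Lemma inv_pow_affine_pos a m x : -1 < a < 1 -> -1 <= x <= 1 -> 0 < / (1 + a * x) ^ m.
Proof. intros Ha Hx. apply Rinv_0_lt_compat, pow_lt, affine_pos; assumption. Qed.

Lemma Cont_inv_pow_affine a m : -1 < a < 1 -> Cont (fun x => / (1 + a * x) ^ m).
Proof.
  intros Ha. apply Cont_inv; [cont|]. intros x Hx.
  apply Rgt_not_eq, pow_lt, affine_pos; assumption.
Qed.

Ltac weight :=
  first [apply Cont_inv_pow_affine|intros; apply inv_pow_affine_pos]; assumption.

Lemma I1_inv_pow4_affine a : -1 < a < 1 ->
  I1 (fun x => / (1 + a * x) ^ 4) = 2 * (3 + a ^ 2) / (3 * (1 - a ^ 2) ^ 3).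
Proof.
  intros Ha. assert (H1a : 1 - a ^ 2 <> 0) by nra.
  destruct (Req_dec a 0) as [->|Ha0].
  - rewrite (I1_ext _ (fun _ => 1)) by (intros; field). unfold I1. rewrite RInt_const.
    unfold scal; simpl; unfold mult; simpl. field.
  - unfold I1. apply is_RInt_unique.
    set (F := fun x => - / (3 * a) * / (1 + a * x) ^ 3).
    replace (2 * (3 + a ^ 2) / (3 * (1 - a ^ 2) ^ 3)) with (minus (F 1) (F (-1))).
    + apply (is_RInt_derive F (fun x => / (1 + a * x) ^ 4)); intros x Hx;
        rewrite Rmin_left, Rmax_right in Hx by lra.
      * assert (1 + a * x <> 0) by (pose proof (affine_pos a x Ha Hx); lra).
        unfold F. auto_derive; [repeat apply Rmult_integral_contrapositive_currified; lra|].
        field. split; assumption.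
      * apply (Cont_inv_pow_affine a 4 Ha x Hx).
    + unfold minus, plus, opp, F; simpl.
      replace (1 + a * -1) with (1 - a) by ring. replace (1 + a * 1) with (1 + a) by ring.
      field. repeat split; lra.
Qed.

Lemma dderiv_eq f x l : derivable_pt_lim f x l -> dderiv f x = l.
Proof.
  intros Hl. apply (uniqueness_limite f x); [|exact Hl].
  unfold dderiv. apply epsilon_spec. exists l. exact Hl.
Qed.

Lemma Kc00 a : -1 < a < 1 -> Kc a 0 0 = 2 * (3 + a ^ 2) / (3 * (1 - a ^ 2) ^ 3).
Proof.
  intros Ha. unfold Kc, phi, orth_poly, monic_poly, omega.
  rewrite integral_I1 by (pose proof (Cont_inv_pow_affine a 4 Ha); cont).
  rewrite <- (I1_inv_pow4_affine a Ha). apply I1_ext. intros; simpl; ring.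
Qed.

Lemma dderiv_Kc00 alpha : -1 < alpha < 1 ->
  dderiv (fun a => Kc a 0 0) alpha = 8 * alpha * (5 + alpha ^ 2) / (3 * (1 - alpha ^ 2) ^ 4).
Proof.
  intros Ha. apply dderiv_eq, is_derive_Reals.
  apply (is_derive_ext_loc (fun a => 2 * (3 + a ^ 2) / (3 * (1 - a ^ 2) ^ 3))).
  - assert (Hr : 0 < Rmin (1 - alpha) (1 + alpha)) by (apply Rmin_pos; lra).
    exists (mkposreal _ Hr). intros t Ht.
    change (Rabs (t - alpha) < Rmin (1 - alpha) (1 + alpha)) in Ht.
    pose proof (Rmin_l (1 - alpha) (1 + alpha)). pose proof (Rmin_r (1 - alpha) (1 + alpha)).
    apply Rabs_def2 in Ht. rewrite Kc00 by lra. reflexivity.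
  - assert (1 - alpha ^ 2 <> 0) by nra. assert (0 < 1 + - (alpha * (alpha * 1))) by nra.
    auto_derive; [apply Rgt_not_eq; repeat apply Rmult_lt_0_compat; lra|field; assumption].
Qed.

Lemma Kc_diag alpha k : -1 < alpha < 1 ->
  Kc alpha k k = ip (omega alpha) (phi alpha k) (phi alpha k).
Proof.
  intros Ha. apply (moment_orth_poly (omega alpha)); weight.
Qed.

Lemma Kt_diag alpha k : -1 < alpha < 1 ->
  Kt alpha k k = ip (omegat alpha) (phit alpha k) (phit alpha k).
Proof.
  intros Ha. apply (moment_orth_poly (omegat alpha)); weight.
Qed.

Lemma Kc_pos alpha k : -1 < alpha < 1 -> 0 < Kc alpha k k.
Proof.
  intros Ha. rewrite Kc_diag by exact Ha. apply (ip_orth_poly_pos (omega alpha)); weight.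
Qed.

Lemma Kt_pos alpha k : -1 < alpha < 1 -> 0 < Kt alpha k k.
Proof.
  intros Ha. rewrite Kt_diag by exact Ha. apply (ip_orth_poly_pos (omegat alpha)); weight.
Qed.

Lemma beta_pos alpha k : -1 < alpha < 1 -> 0 < beta alpha k.
Proof. intros Ha. apply Rdiv_pos_pos; [apply Kc_pos|apply Kt_pos]; exact Ha. Qed.

Lemma Gm_ip alpha k l : -1 < alpha < 1 ->
  Gm alpha k l = ip (fun x => x * omegat alpha x) (phit alpha k) (phit alpha l).
Proof.
  intros Ha. unfold Gm. apply Cont_inv_pow_affine with (m := 5%nat) in Ha.
  rewrite integral_I1 by (unfold phit, omegat; cont). apply I1_ext. intros; ring.
Qed.

Lemma Gm_sym alpha k l : -1 < alpha < 1 -> Gm alpha k l = Gm alpha l k.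
Proof. intros Ha. rewrite !Gm_ip by exact Ha. apply ip_sym. Qed.

Lemma bilin_ext n G G' X Y : (forall k l, G k l = G' k l) -> bilin n G X Y = bilin n G' X Y.
Proof.
  intros H. apply rsum_ext. intros k _. f_equal.
  apply rsum_ext. intros; rewrite H; reflexivity.
Qed.

Lemma bilin_Gm_le alpha n X : -1 < alpha < 1 ->
  Rabs (bilin n (Gm alpha) X X) <= wdot n (fun k => Kt alpha k k) X X.
Proof.
  intros Ha. rewrite (bilin_ext _ _ _ _ _ (fun k l => Gm_ip alpha k l Ha)).
  replace (wdot n (fun k => Kt alpha k k) X X)
    with (wdot n (fun k => ip (omegat alpha) (phit alpha k) (phit alpha k)) X X)
    by (apply rsum_ext; intros; rewrite Kt_diag by exact Ha; reflexivity).
  apply (bilin_position_le (omegat alpha)); weight.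
Qed.

(** * Invertibility of D~ *)

Module TriangularFactor.
Import all_boot all_algebra Rstruct GRing.Theory.

Lemma rsumE (F : nat -> R) k : (\sum_(i < k) F i)%R = rsum F k.
Proof. elim: k => [|k IH]; first by rewrite big_ord0. by rewrite big_ord_recr /= IH. Qed.

Lemma exists_inverse_of_unitmx n (A : nat -> nat -> R) :
  (\matrix_(i < n.+1, j < n.+1) A i j)%R \in unitmx -> exists B, is_inverse n.+1 A B.
Proof.
  set Am := (\matrix_(i, j) A i j)%R => HA.
  exists (fun i j => invmx Am (inord i) (inord j)) => i j /ltP Hi /ltP Hj.
  have Hidm : forall M : 'M[R]_n.+1, M = (1%:M)%R -> M (inord i) (inord j) = idm i j.
    move=> M ->. rewrite mxE /idm. case: (Nat.eqb_spec i j) => [->|Hne]; first by rewrite eqxx.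
    suff /negbTE -> : (@inord n i != inord j) by [].
    apply/negP => /eqP Heq. apply: Hne. by rewrite -(@inordK n i) // -(@inordK n j) // Heq.
  split; rewrite /mmul -rsumE.
  - rewrite -(Hidm _ (mulmxV HA)) mxE. apply: eq_bigr => k _. by rewrite !mxE inord_val inordK.
  - rewrite -(Hidm _ (mulVmx HA)) mxE. apply: eq_bigr => k _. by rewrite !mxE inord_val inordK.
Qed.

(* [A E] lower triangular with nonzero diagonal and [E] unit upper triangular give
   [det A = det (A E) <> 0]. *)
Lemma exists_inverse_of_triangular_factor n (A E : nat -> nat -> R) :
  (forall i j, lt i n -> lt j n -> lt i j -> mmul n A E i j = 0) ->
  (forall i, lt i n -> mmul n A E i i <> 0) ->
  (forall i j, lt i n -> lt j n -> lt j i -> E i j = 0) ->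
  (forall i, lt i n -> E i i = 1) ->
  exists B, is_inverse n A B.
Proof.
  case: n => [|m] HAEup HAEdiag HElow HEdiag.
    by exists A => i j /ltP.
  apply: exists_inverse_of_unitmx.
  set Am := (\matrix_(i, j) A i j)%R. set Em : 'M[R]_m.+1 := (\matrix_(i, j) E i j)%R.
  have HAE : forall i j : 'I_m.+1, (Am *m Em)%R i j = mmul m.+1 A E i j.
    by move=> i j; rewrite !mxE /mmul -rsumE; apply: eq_bigr => k _; rewrite !mxE.
  have trig_AE : is_trig_mx (Am *m Em)%R.
    by apply/is_trig_mxP => i j Hij; rewrite HAE; apply: HAEup; apply/ltP.
  have trig_Et : is_trig_mx Em^T%R.
    by apply/is_trig_mxP => i j Hij; rewrite !mxE; apply: HElow; apply/ltP.
  have det_E : (\det Em = 1)%R.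
    rewrite -det_tr det_trig // big1 // => i _. by rewrite !mxE; apply: HEdiag; apply/ltP.
  have : (\det (Am *m Em) != 0)%R.
    rewrite det_trig // prodf_seq_neq0. apply/allP => i _ /=.
    by rewrite HAE; apply/eqP; apply: HAEdiag; apply/ltP.
  by rewrite det_mulmx det_E mulr1 unitmxE unitfE.
Qed.

End TriangularFactor.

Ltac nat_cases := repeat match goal with
  | |- context [Nat.eqb ?a ?b] => destruct (Nat.eqb_spec a b)
  | |- context [Nat.leb ?a ?b] => destruct (Nat.leb_spec a b)
  end; simpl; try lia.

Lemma Dt_upper alpha f i j : (i < j)%nat -> j <> 1%nat -> Dt alpha f i j = 0.
Proof. intros Hij Hj. unfold Dt. nat_cases; reflexivity. Qed.

Lemma Dt_diag alpha f i : (2 <= i)%nat -> Dt alpha f i i = beta alpha i.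
Proof. intros Hi. unfold Dt. nat_cases; reflexivity. Qed.

(* Right multiplication by [shear01 t] adds [t] times column 0 to column 1. *)
Definition shear01 (t : R) (k j : nat) : R :=
  idm k j + (if andb (Nat.eqb k 0) (Nat.eqb j 1) then t else 0).

Lemma mmul_shear01 n A t i j : (1 < n)%nat -> (j < n)%nat ->
  mmul n A (shear01 t) i j = A i j + (if Nat.eqb j 1 then t * A i 0%nat else 0).
Proof.
  intros Hn Hj. unfold mmul, shear01.
  rewrite (rsum_ext _ (fun k => A i k * idm k j +
                                A i k * (if andb (Nat.eqb k 0) (Nat.eqb j 1) then t else 0)))
    by (intros; ring).
  rewrite rsum_plus. f_equal.
  - rewrite (rsum_eq_single _ n j Hj); unfold idm; [rewrite Nat.eqb_refl; ring|].
    intros k _ Hkj. apply Nat.eqb_neq in Hkj. rewrite Hkj. ring.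
  - destruct (Nat.eqb_spec j 1) as [->|Hj1].
    + rewrite (rsum_eq_single _ n 0)
        by (lia || (intros k _ Hk; apply Nat.eqb_neq in Hk; rewrite Hk; simpl; ring)).
      simpl. ring.
    + apply rsum_eq0. intros. rewrite Bool.andb_false_r. ring.
Qed.

(* The pivot left in row 1 once column 0 has cleared the entry [D_{0,1}]. *)
Lemma Dt_pivot_neq0 alpha f : -1 < alpha < 1 -> f 0%nat <> 0 ->
  Dt alpha f 1 1 + - Dt alpha f 0 1 / Dt alpha f 0 0 * Dt alpha f 1 0 <> 0.
Proof.
  intros Ha Hf. cbn [Dt fw Nat.eqb].
  assert (HKt := Kt_pos alpha 0 Ha).
  unfold beta, gamma. rewrite dderiv_Kc00, Kc00 by exact Ha.
  assert (H1 : 0 < 1 - alpha ^ 2) by nra.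
  assert (H3 : 0 < 3 + alpha ^ 2) by nra.
  replace (-4 * f 0%nat + _) with
    (- f 0%nat * (4 + 4 * alpha ^ 2 * (5 + alpha ^ 2) / ((3 + alpha ^ 2) * (1 - alpha ^ 2)))).
  2:{ field. repeat split; try apply pow_nonzero; lra. }
  apply Rmult_integral_contrapositive_currified; [lra|].
  assert (0 <= 4 * alpha ^ 2 * (5 + alpha ^ 2) / ((3 + alpha ^ 2) * (1 - alpha ^ 2))).
  { apply Rle_mult_inv_pos; [|apply Rmult_lt_0_compat; assumption].
    pose proof (pow2_ge_0 alpha). nra. }
  lra.
Qed.

Lemma Dt_invertible N alpha f : (1 <= N)%nat -> -1 < alpha < 1 -> f 0%nat <> 0 ->
  exists B, is_inverse (S N) (Dt alpha f) B.
Proof.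
  intros HN Ha Hf.
  assert (Hb0 : Dt alpha f 0 0 = beta alpha 0) by reflexivity.
  assert (Hb0pos := beta_pos alpha 0 Ha).
  set (t := - Dt alpha f 0 1 / Dt alpha f 0 0).
  apply (TriangularFactor.exists_inverse_of_triangular_factor (S N) (Dt alpha f) (shear01 t)).
  - intros i j Hi Hj Hij. rewrite mmul_shear01 by lia.
    destruct (Nat.eqb_spec j 1) as [->|Hj1].
    + replace i with 0%nat by lia. unfold t. field. lra.
    + rewrite Dt_upper by assumption. ring.
  - intros i Hi. rewrite mmul_shear01 by lia.
    destruct (Nat.eqb_spec i 1) as [->|Hi1].
    + apply Dt_pivot_neq0; assumption.
    + rewrite Rplus_0_r. destruct i as [|[|i]]; [lra|lia|].
      rewrite Dt_diag by lia. apply Rgt_not_eq, beta_pos, Ha.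
  - intros i j Hi Hj Hji. unfold shear01, idm.
    destruct (Nat.eqb_spec i j); [lia|]. destruct (Nat.eqb_spec i 0); [lia|]. simpl. ring.
  - intros i Hi. unfold shear01, idm. rewrite Nat.eqb_refl.
    destruct (Nat.eqb_spec i 0) as [->|]; simpl; ring.
Qed.

Theorem corollary1 (N : nat) (c alpha : R) (f : nat -> R)
  (hN : (1 <= N)%nat) (hc : 0 < c) (halpha : -1 < alpha < 1)
  (hf0 : f 0%nat <> 0) (a b : R) :
  is_eigenvalue (S N) (charmat N c alpha f) a b ->
  b = 0 /\ - c <= a <= c.
Proof.
  intros Heig.
  assert (HD : is_inverse (S N) (Dt alpha f) (minv (S N) (Dt alpha f))).
  { unfold minv. apply epsilon_spec, Dt_invertible; assumption. }
  apply is_eigenvalue_scale in Heig; [|lra].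
  apply (is_eigenvalue_similar _ _ _ _ _ _ HD) in Heig.
  apply is_eigenvalue_weighted_symmetric in Heig as [Hb Ha].
  - assert (Ha' : - c <= a / c * c <= c) by nra.
    replace (a / c * c) with a in Ha' by (field; lra).
    split; [|exact Ha']. replace b with (b / c * c) by (field; lra). rewrite Hb. ring.
  - intros k _. apply Kt_pos, halpha.
  - intros k l _ _. apply Gm_sym, halpha.
  - intros X. apply bilin_Gm_le, halpha.
Qed.
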